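(* Let $\pi_0:Z_0\to Z$ be the minimal resolution of a log terminal surface singularity, with exceptional curves $E_1,\dots,E_r$, $b_i=-E_i^2$, and numerical cycle $Z_{\mathrm{num}}$. Let $D=\sum_{i=1}^r n_iE_i$ be an effective exceptional divisor and let $s$ be the minimal integer with $D\le sZ_{\mathrm{num}}$. Then $$-D^2\ge 2s+\sum_{i=1}^r(b_i-2)n_i.$$
   Context: The numerical cycle $Z_{\mathrm{num}}$ is the minimal nonzero effective $\pi_0$-exceptional divisor $F$ with $F\cdot E_i\le0$ for all $i$. *)

From mathcomp Require Import all_boot all_order all_algebra.
Set Implicit Arguments. Unset Strict Implicit. Unset Printing Implicit Defensive.
Import Order.TTheory GRing.Theory Num.Theory.
Local Open Scope ring_scope.

(* Exceptional configuration: r exceptional curves E_0..E_{r-1};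
   M i j = E_i . E_j (intersection matrix), pa i = arithmetic genus of E_i. *)

Definition selfint_b (r : nat) (M : 'M[int]_r) (i : 'I_r) : int := - M i i.

(* K_{Z_0} . E_i by adjunction: 2 p_a(E_i) - 2 - E_i^2 *)
Definition canon_dot (r : nat) (M : 'M[int]_r) (pa : 'I_r -> nat) (i : 'I_r) : int :=
  2 * (pa i)%:Z - 2 - M i i.

Definition intersection_matrix (r : nat) (M : 'M[int]_r) : Prop :=
  (forall i j, M i j = M j i) /\ (forall i j, i != j -> 0 <= M i j).

Definition neg_definite (r : nat) (M : 'M[int]_r) : Prop :=
  forall v : 'I_r -> rat, (exists i, v i != 0) ->
    \sum_i \sum_j v i * v j * (M i j)%:~R < 0.

Definition connected_config (r : nat) (M : 'M[int]_r) : Prop :=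
  forall i j : 'I_r, connect (fun k l => M k l != 0) i j.

(* minimality: no (-1)-curve, i.e. no smooth rational curve with E^2 = -1 *)
Definition minimal_config (r : nat) (M : 'M[int]_r) (pa : 'I_r -> nat) : Prop :=
  forall i, ~ (M i i = -1 /\ pa i = 0%N).

(* Log terminal: writing K_{Z_0} = pi_0^* K_Z + sum_j a_j E_j (Mumford's
   numerical pull-back), all discrepancies satisfy a_j > -1.  The a_j are
   determined by K_{Z_0}.E_i = sum_j a_j E_j.E_i (unique by negative
   definiteness). *)
Definition log_terminal (r : nat) (M : 'M[int]_r) (pa : 'I_r -> nat) : Prop :=
  exists a : 'I_r -> rat,
    (forall i, \sum_j a j * (M j i)%:~R = (canon_dot M pa i)%:~R) /\
    (forall j, -1 < a j).

Definition log_terminal_min_resolution (r : nat) (M : 'M[int]_r) (pa : 'I_r -> nat)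
  : Prop :=
  [/\ intersection_matrix M, neg_definite M, connected_config M,
      minimal_config M pa & log_terminal M pa].

Definition dot_E (r : nat) (M : 'M[int]_r) (m : 'I_r -> nat) (i : 'I_r) : int :=
  \sum_j (m j)%:Z * M j i.

Definition dot (r : nat) (M : 'M[int]_r) (m n : 'I_r -> nat) : int :=
  \sum_i \sum_j (m i)%:Z * (n j)%:Z * M i j.

(* effective exceptional divisors are coefficient vectors m : 'I_r -> nat;
   F <= G componentwise *)
Definition div_le (r : nat) (m n : 'I_r -> nat) : Prop := forall i, (m i <= n i)%N.

Definition nonzero_div (r : nat) (m : 'I_r -> nat) : Prop := exists i, m i != 0%N.

Definition anti_nef (r : nat) (M : 'M[int]_r) (m : 'I_r -> nat) : Prop :=
  forall i, dot_E M m i <= 0.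

Definition numerical_cycle (r : nat) (M : 'M[int]_r) (z : 'I_r -> nat) : Prop :=
  [/\ nonzero_div z, anti_nef M z &
      forall F : 'I_r -> nat, nonzero_div F -> anti_nef M F -> div_le z F].

From mathcomp Require Import all_boot all_order all_algebra.
From mathcomp Require Import zify ring lra.
Import Order.TTheory GRing.Theory Num.Theory.
Set Implicit Arguments. Unset Strict Implicit. Unset Printing Implicit Defensive.
Local Open Scope ring_scope.

(* Put 2chi(D) := -D^2 - sum_i (b_i - 2) n_i, so that
   2chi(A + B) = 2chi(A) + 2chi(B) - 2 A.B.  Log terminality gives
   2chi(B) >= 2 for every nonzero effective B: since all discrepancies lie in
   (-1, 0], the negativity lemma yields a component E_i of B with
   (B - E_i).E_i <= 1, and 2chi(B) = 2chi(B - E_i) + 2 - 2 (B - E_i).E_i.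
   If s is minimal with D <= s Z_num, split D = A + B with
   A = min(D, (s-1) Z_num).  Then B != 0, and A agrees with (s-1) Z_num on the
   support of B, so A.B <= ((s-1) Z_num).B <= 0; by induction on s,
   2chi(D) >= 2chi(A) + 2 >= 2s. *)

Section BilinearForm.
Variables (R : numDomainType) (r : nat) (M : 'M[int]_r).

Definition form (u v : 'I_r -> R) : R := \sum_i \sum_j u i * v j * (M i j)%:~R.

Definition natv (m : 'I_r -> nat) : 'I_r -> R := fun i => (m i)%:R.

Definition unitv (i : 'I_r) : 'I_r -> R := fun k => (k == i)%:R.

Lemma formDl u v w x :
  (forall i, w i = u i + v i) -> form w x = form u x + form v x.
Proof.
move=> Dw; rewrite /form -big_split; apply: eq_bigr => i _.
by rewrite -big_split; apply: eq_bigr => j _; rewrite Dw !mulrDl.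
Qed.

Lemma formDr u v w x :
  (forall i, w i = u i + v i) -> form x w = form x u + form x v.
Proof.
move=> Dw; rewrite /form -big_split; apply: eq_bigr => i _.
by rewrite -big_split; apply: eq_bigr => j _; rewrite Dw mulrDr mulrDl.
Qed.

Lemma form_sumr u v : form u v = \sum_j v j * \sum_i u i * (M i j)%:~R.
Proof.
rewrite /form exchange_big; apply: eq_bigr => j _; rewrite mulr_sumr.
by apply: eq_bigr => i _; rewrite mulrA (mulrC (v j)).
Qed.

Lemma formC u v : (forall i j, M i j = M j i) -> form u v = form v u.
Proof.
move=> symM; rewrite /form exchange_big; apply: eq_bigr => i _.
by apply: eq_bigr => j _; rewrite symM (mulrC (u j)).
Qed.

Lemma form_eq0l u v : (forall i, u i = 0) -> form u v = 0.
Proof. by move=> u0; rewrite /form big1 // => i _; rewrite big1 // => j _; rewrite u0 !mul0r. Qed.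

Lemma form_ge0_disjoint u v :
  (forall i j, i != j -> 0 <= M i j) ->
  (forall i, 0 <= u i) -> (forall i, 0 <= v i) -> (forall i, u i * v i = 0) ->
  0 <= form u v.
Proof.
move=> offdiag u0 v0 uv0; apply: sumr_ge0 => i _; apply: sumr_ge0 => j _.
have [<-|neq_ij] := eqVneq i j; first by rewrite uv0 mul0r.
by rewrite !mulr_ge0 // ler0z offdiag.
Qed.

Lemma sum_mul_unitv (c : 'I_r -> R) i : \sum_k c k * unitv i k = c i.
Proof.
rewrite (bigD1 i) //= /unitv eqxx mulr1 big1 ?addr0 // => k /negPf->.
by rewrite mulr0.
Qed.

Lemma form_unitvr u i : form u (unitv i) = \sum_k u k * (M k i)%:~R.
Proof.
by rewrite form_sumr; under eq_bigr do rewrite mulrC; rewrite sum_mul_unitv.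
Qed.

Lemma form_unitv i : form (unitv i) (unitv i) = (M i i)%:~R.
Proof. by rewrite form_unitvr; under eq_bigr do rewrite mulrC; rewrite sum_mul_unitv. Qed.

End BilinearForm.

Section EffectiveDivisors.
Variables (r : nat) (M : 'M[int]_r).

Definition curve (i : 'I_r) : 'I_r -> nat := fun k => (k == i).

(* When all E_i are rational, this is 2 chi(O_D) by Riemann-Roch. *)
Definition twice_chi (m : 'I_r -> nat) : int :=
  - dot M m m - \sum_i (selfint_b M i - 2) * (m i)%:Z.

Lemma dot_E_natv (R : numDomainType) m i :
  (dot_E M m i)%:~R = \sum_j natv R m j * (M j i)%:~R :> R.
Proof. by rewrite /dot_E rmorph_sum; apply: eq_bigr => j _; rewrite rmorphM. Qed.

Lemma dot_natv m n : dot M m n = form M (natv int m) (natv int n).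
Proof.
by rewrite /dot /form; apply: eq_bigr => i _; apply: eq_bigr => j _; rewrite /natv !natz intz.
Qed.

Lemma dotDl u v w x :
  (forall i, w i = u i + v i)%N -> dot M w x = dot M u x + dot M v x.
Proof. by move=> Dw; rewrite !dot_natv; apply: formDl => i; rewrite /natv Dw natrD. Qed.

Lemma dotDr u v w x :
  (forall i, w i = u i + v i)%N -> dot M x w = dot M x u + dot M x v.
Proof. by move=> Dw; rewrite !dot_natv; apply: formDr => i; rewrite /natv Dw natrD. Qed.

Lemma dotC u v : (forall i j, M i j = M j i) -> dot M u v = dot M v u.
Proof. by move=> symM; rewrite !dot_natv formC. Qed.

Lemma dot_sumr u v : dot M u v = \sum_j (v j)%:Z * dot_E M u j.
Proof.
rewrite dot_natv form_sumr; apply: eq_bigr => j _.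
by rewrite -[dot_E _ _ _]intz dot_E_natv /natv natz.
Qed.

Lemma dot_curve m i : dot M m (curve i) = dot_E M m i.
Proof. by rewrite dot_natv -[dot_E _ _ _]intz dot_E_natv; apply: form_unitvr. Qed.

Lemma dot_curve_curve i : dot M (curve i) (curve i) = M i i.
Proof. by rewrite dot_natv -[M i i]intz; apply: form_unitv. Qed.

Lemma dot_eq0l u v : (forall i, u i = 0)%N -> dot M u v = 0.
Proof. by move=> u0; rewrite dot_natv form_eq0l // => i; rewrite /natv u0. Qed.

Lemma dot_ge0_disjoint u v :
  (forall i j, i != j -> 0 <= M i j) -> (forall i, u i * v i = 0)%N ->
  0 <= dot M u v.
Proof.
move=> offdiag uv0; rewrite dot_natv; apply: form_ge0_disjoint => // i.
by rewrite /natv -natrM uv0.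
Qed.

Lemma dot_le0_anti_nef u v : anti_nef M u -> dot M u v <= 0.
Proof. by move=> nef_u; rewrite dot_sumr sumr_le0 // => j _; rewrite mulr_ge0_le0. Qed.

Lemma anti_nef_scale s z : anti_nef M z -> anti_nef M (fun i => s * z i)%N.
Proof.
move=> nef_z j; have -> : dot_E M (fun i => s * z i)%N j = s%:Z * dot_E M z j.
  by rewrite /dot_E mulr_sumr; apply: eq_bigr => i _; rewrite PoszM mulrA.
by rewrite mulr_ge0_le0.
Qed.

Lemma sum_curve i : (\sum_k curve i k)%N = 1%N.
Proof. by rewrite (bigD1 i) //= /curve eqxx big1 // => k /negPf->. Qed.

Lemma twice_chi_add u v w : (forall i j, M i j = M j i) ->
  (forall i, w i = u i + v i)%N ->
  twice_chi w = twice_chi u + twice_chi v - 2 * dot M u v.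
Proof.
move=> symM Dw; rewrite /twice_chi (dotDl _ Dw) !(dotDr _ Dw) (dotC v u symM).
have -> : \sum_i (selfint_b M i - 2) * (w i)%:Z =
    \sum_i (selfint_b M i - 2) * (u i)%:Z + \sum_i (selfint_b M i - 2) * (v i)%:Z.
  by rewrite -big_split; apply: eq_bigr => i _; rewrite Dw PoszD mulrDr.
ring.
Qed.

Lemma twice_chi_curve i : twice_chi (curve i) = 2.
Proof.
rewrite /twice_chi dot_curve_curve.
have -> : \sum_k (selfint_b M k - 2) * (curve i k)%:Z = selfint_b M i - 2.
  rewrite -[RHS](sum_mul_unitv (fun k => selfint_b M k - 2)).
  by apply: eq_bigr => k _; congr (_ * _); rewrite /unitv natz.
rewrite /selfint_b; ring.
Qed.

Lemma twice_chi_eq0 m : (forall i, m i = 0)%N -> twice_chi m = 0.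
Proof.
move=> m0; rewrite /twice_chi dot_eq0l // big1 ?subr0 ?oppr0 // => i _.
by rewrite m0 mulr0.
Qed.

End EffectiveDivisors.

Section NegativeDefinite.
Variables (r : nat) (M : 'M[int]_r).
Hypothesis negM : neg_definite M.

Lemma selfint_lt0 i : M i i < 0.
Proof.
have /negM : exists k, unitv rat i k != 0 by exists i; rewrite /unitv eqxx oner_eq0.
by rewrite -/(form M _ _) form_unitv ltrz0.
Qed.

Hypothesis intM : intersection_matrix M.

(* With P, N the positive and negative parts of v, P.P = P.v + P.N >= 0. *)
Lemma negativity (v : 'I_r -> rat) :
  (forall i, 0 < v i -> 0 <= \sum_j v j * (M j i)%:~R) -> forall i, v i <= 0.
Proof.
case: intM => symM offdiag v_nef.
pose P i := if 0 < v i then v i else 0.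
pose N i := P i - v i.
have P_ge0 i : 0 <= P i by rewrite /P; case: ifP => // /ltW.
have N_ge0 i : 0 <= N i.
  by rewrite /N /P; case: ifP => [_|/negbT]; rewrite ?subrr // -leNgt sub0r oppr_ge0.
have PN0 i : P i * N i = 0 by rewrite /N /P; case: ifP; rewrite ?subrr ?mulr0 ?mul0r.
have PvN i : P i = v i + N i by rewrite /N addrC subrK.
have PP_ge0 : 0 <= form M P P.
  rewrite (formDr _ P PvN) (formC _ _ symM) form_sumr.
  apply: addr_ge0; last exact: form_ge0_disjoint.
  apply: sumr_ge0 => j _; rewrite /P; case: ifP => [vj_gt0|_]; last by rewrite mul0r.
  by rewrite mulr_ge0 ?v_nef // ltW.
move=> i; rewrite leNgt; apply/negP => vi_gt0.
have /negM : exists i, P i != 0 by exists i; rewrite /P vi_gt0 gt_eqF.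
by rewrite -/(form M P P) ltNge PP_ge0.
Qed.

End NegativeDefinite.

Section LogTerminal.
Variables (r : nat) (M : 'M[int]_r) (pa : 'I_r -> nat).
Hypothesis resM : log_terminal_min_resolution M pa.

Lemma canon_dot_ge0 i : 0 <= canon_dot M pa i.
Proof.
case: resM => _ negM _ minM _; have := selfint_lt0 negM i; have := minM i.
rewrite /canon_dot; case: (pa i) => [|p] not_minus1 Mii_lt0; last lia.
have : M i i != -1 by apply/eqP => Mii; apply: not_minus1.
lia.
Qed.

Lemma discrepancy_le0 (a : 'I_r -> rat) :
  (forall i, \sum_j a j * (M j i)%:~R = (canon_dot M pa i)%:~R) -> forall i, a i <= 0.
Proof.
case: resM => intM negM _ _ _ Ka; apply: (negativity negM intM) => i _.
by rewrite Ka ler0z canon_dot_ge0.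
Qed.

(* Otherwise v = B + a (a the discrepancies) meets every E_i with v i > 0
   nonnegatively, so v <= 0 by [negativity]; this fails where B i > 0, since
   a i > -1. *)
Lemma exists_removable_curve B :
  nonzero_div B -> exists2 i, (0 < B i)%N & dot_E M B i <= 1 + M i i.
Proof.
case: (resM) => intM negM _ _ [a [Ka a_gt]] [i0 nzBi0].
have a_le0 := discrepancy_le0 Ka.
suff /existsP[i /andP[]] : [exists i, (0 < B i)%N && (dot_E M B i <= 1 + M i i)].
  by exists i.
apply: contraT; rewrite negb_exists => /forallP dot_big.
pose v i := (B i)%:R + a i.
have v_nef i : 0 < v i -> 0 <= \sum_j v j * (M j i)%:~R.
  move=> vi_gt0; have Bi_gt0 : (0 < B i)%N.
    by rewrite lt0n; apply: contraTneq vi_gt0 => Bi_eq0; rewrite /v Bi_eq0 add0r -leNgt a_le0.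
  have := dot_big i; rewrite Bi_gt0 -ltNge => dot_gt.
  have -> : \sum_j v j * (M j i)%:~R = (dot_E M B i + canon_dot M pa i)%:~R.
    by rewrite intrD -Ka dot_E_natv -big_split; apply: eq_bigr => j _; rewrite mulrDl.
  rewrite ler0z /canon_dot; lia.
have := negativity negM intM v_nef i0; rewrite /v.
have : 1 <= (B i0)%:R :> rat by rewrite ler1n lt0n.
have := a_gt i0; lra.
Qed.

Lemma twice_chi_ge2 B : nonzero_div B -> 2 <= twice_chi M B.
Proof.
have [symM _] : intersection_matrix M by case: resM.
have [n] := ubnP (\sum_k B k)%N; elim: n B => // n IHn B sumB nzB.
have [i Bi_gt0 dotBi] := exists_removable_curve nzB.
pose B' k := (B k - curve i k)%N.
have DB k : B k = (B' k + curve i k)%N.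
  by rewrite /B' subnK // /curve; case: eqVneq => [->|].
rewrite (twice_chi_add symM DB) twice_chi_curve.
have dotB' : dot M B' (curve i) <= 1.
  by have := dotDl M (curve i) DB; rewrite dot_curve_curve !dot_curve; lia.
have [k nzB'k|B'0] := pickP (fun k => B' k != 0%N).
  have : 2 <= twice_chi M B'.
    apply: IHn; last by exists k.
    have : (\sum_k B k = \sum_k B' k + 1)%N.
      by rewrite (eq_bigr _ (fun k _ => DB k)) big_split /= sum_curve.
    lia.
  lia.
have {}B'0 k : B' k = 0%N by apply/eqP/negbFE/B'0.
by rewrite twice_chi_eq0 // dot_eq0l.
Qed.

Lemma twice_chi_ge_level z s D :
  anti_nef M z -> div_le D (fun i => s * z i)%N ->
  (forall t : nat, div_le D (fun i => t * z i)%N -> (s <= t)%N) ->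
  2 * s%:Z <= twice_chi M D.
Proof.
have [symM offdiag] : intersection_matrix M by case: resM.
move=> nef_z; elim: s D => [|s IHs] D Ds Dmin.
  by rewrite twice_chi_eq0 // => i; have := Ds i; lia.
have [i0 lt_i0] : exists i, (s * z i < D i)%N.
  suff /existsP[i] : [exists i, s * z i < D i]%N by exists i.
  apply: contraT; rewrite negb_exists => /forallP D_le.
  by have := Dmin s; rewrite ltnn; apply => i; rewrite leqNgt D_le.
have z_i0 : (0 < z i0)%N by have := Ds i0; nia.
pose A i := minn (D i) (s * z i)%N.
pose B i := (D i - A i)%N.
have DAB i : D i = (A i + B i)%N by rewrite /B subnKC // geq_minl.
have A_level : 2 * s%:Z <= twice_chi M A.
  apply: IHs => [i|t At]; first exact: geq_minr.
  by have := At i0; rewrite /A (minn_idPr (ltnW lt_i0)) leq_pmul2r.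
have B_ge2 : 2 <= twice_chi M B by apply: twice_chi_ge2; exists i0; rewrite /B /A; lia.
have AB_le0 : dot M A B <= 0.
  pose C i := (s * z i - A i)%N.
  have sZ_AC i : (s * z i = A i + C i)%N by rewrite /C subnKC // geq_minr.
  have : 0 <= dot M C B.
    apply: dot_ge0_disjoint => // i; rewrite /C /B /A /=.
    by case: (leqP (D i) (s * z i)%N) => _; rewrite subnn ?muln0.
  have := dotDl M B sZ_AC; have := dot_le0_anti_nef B (anti_nef_scale s nef_z).
  lia.
rewrite (twice_chi_add symM DAB); lia.
Qed.

End LogTerminal.

Theorem mainTheorem11 (r : nat) (M : 'M[int]_r) (pa : 'I_r -> nat)
  (znum : 'I_r -> nat) (n : 'I_r -> nat) (s : nat) :
  log_terminal_min_resolution M pa ->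
  numerical_cycle M znum ->
  (* s is the minimal integer with D <= s Z_num *)
  div_le n (fun i => (s * znum i)%N) ->
  (forall t : nat, div_le n (fun i => (t * znum i)%N) -> (s <= t)%N) ->
  - dot M n n >= 2 * s%:Z + \sum_i (selfint_b M i - 2) * (n i)%:Z.
Proof.
move=> resM [_ nef_z _] n_le s_min.
by rewrite -lerBrDr; exact: (twice_chi_ge_level resM nef_z n_le s_min).
Qed.
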